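(* Suppose $a\colon\mathbb{N}\to\mathbb{C}$ has the property that for each $N\in\mathbb{N}$ there exist infinitely many $m\in\mathbb{N}$ such that $|a(m)|>N|a(m+j)|$ for every $j\in\mathbb{Z}$ with $1\le|j|\le N$. Then the power series $\sum_{n\ge0}a(n)x^n\in\mathbb{C}((x))$ does not satisfy any non-trivial (linear) differential equation $\sum_{i=0}^d q_i f^{(i)}=0$ with coefficients $q_i\in\mathbb{C}(x)$ not all zero, and hence is transcendental over $\mathbb{C}(x)$.
   Context: $\mathbb{C}((x))$ is the field of formal Laurent series in $x$ with complex coefficients, with the usual formal derivation $d/dx$; $f^{(i)}$ denotes the $i$-th derivative. *)

From HB Require Import structures.
From mathcomp Require Import all_boot all_order all_algebra.
From mathcomp Require Import complex reals.
Set Implicit Arguments. Unset Strict Implicit. Unset Printing Implicit Defensive.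
Import Order.TTheory GRing.Theory Num.Theory.
Local Open Scope ring_scope.

(* Formal power series over a ring K, as coefficient sequences:
   f represents \sum_n f n x^n (an element of K[[x]] inside K((x))). *)
Definition series (K : nzRingType) := nat -> K.

Section Series.
Variable K : comNzRingType.

Definition smul (f g : series K) : series K :=
  fun n => \sum_(k < n.+1) f k * g (n - k)%N.

Definition sone : series K := fun n => (n == 0%N)%:R.

Definition sderiv (f : series K) : series K := fun n => f n.+1 *+ n.+1.

Definition sderivn (i : nat) (f : series K) : series K := iter i sderiv f.

Definition sexp (f : series K) (k : nat) : series K := iter k (smul f) sone.

Definition ser_of_poly (p : {poly K}) : series K := fun n => p`_n.

Definition diff_op_apply (d : nat) (q : 'I_d.+1 -> {poly K}) (f : series K)
  : series K :=
  fun n => \sum_(i < d.+1) smul (ser_of_poly (q i)) (sderivn i f) n.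

(* P(x, f) for P = \sum_k P_k(x) y^k *)
Definition poly_eval_series (P : {poly {poly K}}) (f : series K) : series K :=
  fun n => \sum_(k < size P) smul (ser_of_poly P`_k) (sexp f k) n.
End Series.

Definition ext_int (K : nzRingType) (a : nat -> K) (z : int) : K :=
  match z with Posz n => a n | Negz _ => 0 end.

Definition gap_property (R : realType) (a : nat -> R[i]) : Prop :=
  forall N : nat, forall M : nat, exists m : nat, (M <= m)%N /\
    forall j : int, (1 <= `|j|)%R -> (`|j| <= N%:Z)%R ->
      N%:R * `|ext_int a (m%:Z + j)| < `|a m|.

(* If \sum_i q_i f^(i) = 0, comparing the coefficients of x^(n+B), for B
   bounding the sizes of the q_i, gives a recurrence \sum_t P_t(n) a(n+t) = 0
   whose coefficients P_t are polynomials, not all zero.  Let P_t0 have maximal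
   degree e.  At an index m = n + t0 provided by the gap property for a large N,
   |P_t0(n) a(m)| is at least |lead_coef P_t0| n^e |a(m)| / 2, whereas the other
   terms add up to at most (\sum_t |P_t|_1) n^e |a(m)| / N: they cannot cancel.

   If P(x, f) = 0 with P of minimal degree d in y, then dP/dy(x, f) is a nonzero
   element of C(x)[f], algebraic over C(x), hence invertible in C(x)[f].
   Differentiating P(x, f) = 0 thus puts f', and then every f^(i), in C(x)[f],
   which is spanned over C(x) by 1, f, ..., f^(d-1); so f, f', ..., f^(d) are
   linearly dependent over C(x). *)

From HB Require Import structures.
From mathcomp Require Import all_boot all_order all_algebra.
From mathcomp Require Import complex reals.
From mathcomp Require Import boolp zify ring.
Import Order.TTheory GRing.Theory Num.Theory.
Set Implicit Arguments. Unset Strict Implicit. Unset Printing Implicit Defensive.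
Local Open Scope ring_scope.

Section SeriesRing.
Variable K : comNzRingType.
Implicit Types (f g h : series K) (p q : {poly K}).

Definition sadd f g : series K := fun n => f n + g n.
Definition sopp f : series K := fun n => - f n.
Definition szero : series K := fun _ => 0.

Lemma saddA : associative sadd.
Proof. by move=> f g h; apply: funext => n; rewrite /sadd addrA. Qed.
Lemma saddC : commutative sadd.
Proof. by move=> f g; apply: funext => n; rewrite /sadd addrC. Qed.
Lemma add0s : left_id szero sadd.
Proof. by move=> f; apply: funext => n; rewrite /sadd add0r. Qed.
Lemma addNs : left_inverse szero sopp sadd.
Proof. by move=> f; apply: funext => n; rewrite /sadd addNr. Qed.

HB.instance Definition _ := Choice.on (series K).
HB.instance Definition _ := GRing.isZmodule.Build (series K) saddA saddC add0s addNs.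

(* The ring laws of the Cauchy product are transported from [{poly K}]:
   the n-th coefficient of a product only depends on the truncations at n. *)
Definition agree n p f := forall k, (k <= n)%N -> p`_k = f k.
Definition trunc_series n f : {poly K} := \poly_(i < n.+1) f i.

Lemma agree_trunc n f : agree n (trunc_series n f) f.
Proof. by move=> k kn; rewrite coef_poly ltnS kn. Qed.

Lemma agreeW m n p f : (m <= n)%N -> agree n p f -> agree m p f.
Proof. by move=> mn pf k km; apply/pf/(leq_trans km). Qed.

Lemma agree_coef n p f g : agree n p f -> agree n p g -> f n = g n.
Proof. by move=> pf pg; rewrite -pf // -pg. Qed.

Lemma agreeD n p q f g : agree n p f -> agree n q g -> agree n (p + q) (sadd f g).
Proof. by move=> pf qg k kn; rewrite coefD pf ?qg. Qed.

Lemma agreeM n p q f g : agree n p f -> agree n q g -> agree n (p * q) (smul f g).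
Proof.
move=> pf qg k kn; rewrite coefM; apply: eq_bigr => j _.
have jk : (j <= k)%N by rewrite -ltnS.
by rewrite pf ?qg //; apply: leq_trans kn; [exact: leq_subr | exact: jk].
Qed.

Lemma agree1 n : agree n 1 (sone K).
Proof. by move=> k _; rewrite coef1. Qed.

Lemma smulA : associative (@smul K).
Proof.
move=> f g h; apply: funext => n; set tr := trunc_series n.
apply: (@agree_coef n (tr f * (tr g * tr h))); first by do 2?apply: agreeM; apply: agree_trunc.
by rewrite mulrA; do 2?apply: agreeM; apply: agree_trunc.
Qed.

Lemma smulC : commutative (@smul K).
Proof.
move=> f g; apply: funext => n; apply: (@agree_coef n (trunc_series n f * trunc_series n g)).
  by apply: agreeM; apply: agree_trunc.
by rewrite mulrC; apply: agreeM; apply: agree_trunc.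
Qed.

Lemma smul1 : left_id (sone K) (@smul K).
Proof.
move=> f; apply: funext => n; apply: (@agree_coef n (1 * trunc_series n f)).
  by apply: agreeM; [apply: agree1 | apply: agree_trunc].
by rewrite mul1r; apply: agree_trunc.
Qed.

Lemma smulDl : left_distributive (@smul K) sadd.
Proof.
move=> f g h; apply: funext => n.
apply: (@agree_coef n ((trunc_series n f + trunc_series n g) * trunc_series n h)).
  by apply: agreeM; [apply: agreeD|]; apply: agree_trunc.
by rewrite mulrDl; apply: agreeD; apply: agreeM; apply: agree_trunc.
Qed.

Lemma sone_neq0 : sone K != szero.
Proof. by apply/eqP => /(congr1 (fun f => f 0%N)) /eqP; rewrite oner_eq0. Qed.

HB.instance Definition _ :=
  GRing.Zmodule_isComNzRing.Build (series K) smulA smulC smul1 smulDl sone_neq0.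

Lemma mulsE f g : f * g = smul f g. Proof. by []. Qed.
Lemma addsE f g n : (f + g) n = f n + g n. Proof. by []. Qed.
Lemma sumsE I (r : seq I) (P : pred I) (F : I -> series K) n :
  (\sum_(i <- r | P i) F i) n = \sum_(i <- r | P i) F i n.
Proof. by elim/big_rec2: _ => // i y1 y2 _ <-. Qed.

Lemma sexpE f k : sexp f k = f ^+ k.
Proof. by elim: k => // k IHk; rewrite /sexp iterS -/(sexp f k) IHk exprS. Qed.

Lemma ser_of_poly_is_zmod_morphism : zmod_morphism (@ser_of_poly K).
Proof. by move=> p q; apply: funext => n; rewrite /ser_of_poly coefB. Qed.

Lemma ser_of_poly_is_monoid_morphism : monoid_morphism (@ser_of_poly K).
Proof.
split; first by apply: funext => n; rewrite /ser_of_poly coef1.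
move=> p q; apply: funext => n; apply: (@agree_coef n (p * q)) => //.
by apply: agreeM.
Qed.

HB.instance Definition _ := GRing.isZmodMorphism.Build _ _ (@ser_of_poly K)
  ser_of_poly_is_zmod_morphism.
HB.instance Definition _ := GRing.isMonoidMorphism.Build _ _ (@ser_of_poly K)
  ser_of_poly_is_monoid_morphism.

Lemma ser_of_poly_eq0 p : (ser_of_poly p == 0) = (p == 0).
Proof.
apply/eqP/eqP => [p0|->]; last exact: rmorph0.
by apply/polyP => n; rewrite coef0; exact: (congr1 (fun f => f n) p0).
Qed.

Lemma sderiv0 : sderiv 0 = 0 :> series K.
Proof. by apply: funext => n; rewrite /sderiv mul0rn. Qed.

Lemma sderivD f g : sderiv (f + g) = sderiv f + sderiv g.
Proof. by apply: funext => n; rewrite /sderiv addsE mulrnDl. Qed.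

Lemma agree_deriv n p f : agree n.+1 p f -> agree n p^`() (sderiv f).
Proof. by move=> pf k kn; rewrite coef_deriv pf. Qed.

Lemma sderivM f g : sderiv (f * g) = sderiv f * g + f * sderiv g.
Proof.
apply: funext => n; set tr := trunc_series n.+1.
have agree_tr h : agree n (tr h) h by apply: (agreeW (leqnSn n)); apply: agree_trunc.
have agree_dtr h : agree n (tr h)^`() (sderiv h) by apply/agree_deriv/agree_trunc.
apply: (@agree_coef n (tr f * tr g)^`()).
  by apply/agree_deriv/agreeM; apply: agree_trunc.
by rewrite derivM; apply: agreeD; apply: agreeM.
Qed.

Lemma sderiv_ser_of_poly p : sderiv (ser_of_poly p) = ser_of_poly p^`().
Proof. by apply: funext => n; rewrite /sderiv /ser_of_poly coef_deriv. Qed.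

Lemma sderivnE i f n : sderivn i f n = f (n + i)%N *+ (n + i) ^_ i.
Proof.
elim: i n => [|i IHi] n; first by rewrite addn0.
rewrite /sderivn iterS -/(sderivn i f) /sderiv IHi -mulrnA addSnnS.
by rewrite ffactnSr addnS subSn ?leq_addl // addnK.
Qed.

End SeriesRing.

Section SeriesDomain.
Variable K : idomainType.
Implicit Types f g : series K.

Lemma series_valuation f : f != 0 -> exists v, f v != 0 /\ forall k, (k < v)%N -> f k = 0.
Proof.
move=> f_neq0; have fP : exists n, f n != 0.
  apply: contrapT => nf; move/eqP: f_neq0; apply; apply: funext => n.
  by apply/eqP; apply: contrapT => fn; apply: nf; exists n; apply/negP.
case: (ex_minnP fP) => v fv vmin; exists v; split => // k kv.
by apply/eqP; apply: contraTT kv => fk; rewrite -leqNgt; exact: vmin.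
Qed.

Lemma mul_series_neq0 f g : f != 0 -> g != 0 -> f * g != 0.
Proof.
move=> /series_valuation[v [fv vmin]] /series_valuation[w [gw wmin]].
apply/eqP => /(congr1 (fun h => h (v + w)%N)); rewrite mulsE /smul.
rewrite (bigD1 (Ordinal (leq_addr w v : v < (v + w).+1)%N)) //= big1 ?addr0 ?addKn.
  by move/eqP; rewrite mulf_eq0 (negPf fv) (negPf gw).
move=> k /eqP kv; case: (ltngtP k v) => [/vmin->|vk|kv']; rewrite ?mul0r //.
- by rewrite wmin ?mulr0 //; have := ltn_ord k; lia.
- by case: kv; apply: val_inj.
Qed.

End SeriesDomain.

Section PolyGrowth.
Variable C : numFieldType.
Implicit Types (p : {poly C}) (x : C).

Definition coef_norm1 p : C := \sum_(i < size p) `|p`_i|.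

Lemma coef_norm1_ge0 p : 0 <= coef_norm1 p.
Proof. by apply: sumr_ge0 => i _. Qed.

Lemma norm_horner_le p e x :
  (size p <= e.+1)%N -> 1 <= `|x| -> `|p.[x]| <= coef_norm1 p * `|x| ^+ e.
Proof.
move=> pe x1; rewrite horner_coef /coef_norm1 mulr_suml.
apply: le_trans (ler_norm_sum _ _ _) _; apply: ler_sum => i _.
rewrite normrM normrX ler_wpM2l // ler_weXn2l //.
by rewrite -ltnS; apply: leq_trans pe.
Qed.

Lemma norm_horner_ge p : exists2 M, 1 <= M &
  forall x, M <= `|x| -> `|lead_coef p| * `|x| ^+ (size p).-1 <= 2 * `|p.[x]|.
Proof.
have [->|p_neq0] := eqVneq p 0.
  by exists 1 => // x _; rewrite lead_coef0 normr0 mul0r horner0 normr0 mulr0.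
set e := (size p).-1; set l := `|lead_coef p|; pose S := \sum_(i < e) `|p`_i|.
have l_gt0 : 0 < l by rewrite normr_gt0 lead_coef_eq0.
have S_ge0 : 0 <= S by apply: sumr_ge0 => i _.
have M1 : 1 <= 1 + 2 * S / l.
  by rewrite lerDl; apply: divr_ge0; [apply: mulr_ge0 | apply: ltW].
exists (1 + 2 * S / l) => // x xM; have x1 : 1 <= `|x| := le_trans M1 xM.
have size_p : size p = e.+1 by rewrite /e prednK // size_poly_gt0.
set T := \sum_(i < e) p`_i * x ^+ i.
have pE : p.[x] = lead_coef p * x ^+ e + T.
  by rewrite horner_coef size_p big_ord_recr /= lead_coefE size_p addrC.
have T_le : `|T| <= S * `|x| ^+ e.-1.
  rewrite /S mulr_suml; apply: le_trans (ler_norm_sum _ _ _) _; apply: ler_sum => i _.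
  rewrite normrM normrX ler_wpM2l // ler_weXn2l //.
  by rewrite -ltnS prednK // (leq_trans _ (ltn_ord i)).
have T_small : 2 * `|T| <= l * `|x| ^+ e.
  apply: le_trans (ler_wpM2l _ T_le) _ => //.
  have [e0|e_gt0] := posnP e.
    by rewrite /S e0 big_ord0 mul0r mulr0 expr0 mulr1 ltW.
  have -> : l * `|x| ^+ e = l * `|x| * `|x| ^+ e.-1 by rewrite -mulrA -exprS prednK.
  rewrite mulrA ler_wpM2r ?exprn_ge0 // [l * _]mulrC -ler_pdivrMr //.
  by apply: le_trans xM; rewrite lerDr.
rewrite pE; apply: le_trans (ler_wpM2l _ (lerB_normD _ _)) => //.
rewrite normrM normrX -/l -subr_ge0.
have -> : 2 * (l * `|x| ^+ e - `|T|) - l * `|x| ^+ e = l * `|x| ^+ e - 2 * `|T| by ring.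
by rewrite subr_ge0.
Qed.

End PolyGrowth.

Section GapRecurrence.
Variable C : numFieldType.
Hypothesis archi : forall x : C, 0 <= x -> exists n : nat, x < n%:R.

Definition num_gap_property (a : nat -> C) : Prop :=
  forall N : nat, forall M : nat, exists m : nat, (M <= m)%N /\
    forall j : int, (1 <= `|j|)%R -> (`|j| <= N%:Z)%R ->
      N%:R * `|ext_int a (m%:Z + j)| < `|a m|.

Lemma gap_dominant_index (a : nat -> C) N n0 t0 :
  num_gap_property a -> (0 < N)%N -> (t0 <= N)%N ->
  exists n, [/\ (n0 <= n)%N, 0 < `|a (n + t0)%N| &
    forall t, t != t0 -> (t <= N)%N -> N%:R * `|a (n + t)%N| <= `|a (n + t0)%N|].
Proof.
move=> gap N_gt0 t0N; have [m [n0m gapm]] := gap N (n0 + t0)%N.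
exists (m - t0)%N; rewrite subnK; last by lia.
split=> [||t tt0 tN]; first by lia.
  apply: le_lt_trans (gapm 1 isT N_gt0).
  by rewrite mulr_ge0 // normr_ge0.
have := gapm (t%:Z - t0%:Z).
have -> : (m%:Z + (t%:Z - t0%:Z) = (m - t0 + t)%N%:Z)%R by lia.
by move=> gapt; apply/ltW/gapt; move: tt0 => /eqP; lia.
Qed.

Lemma recurrence_dominant_bound (a : nat -> C) r (P : 'I_r.+1 -> {poly C}) e n
    (t0 : 'I_r.+1) N :
  (forall t, size (P t) <= e.+1)%N -> (0 < n)%N ->
  \sum_t (P t).[n%:R] * a (n + t)%N = 0 ->
  (forall t, t != t0 -> N%:R * `|a (n + t)%N| <= `|a (n + t0)%N|) ->
  N%:R * `|(P t0).[n%:R]| * `|a (n + t0)%N|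
    <= (\sum_t coef_norm1 (P t)) * n%:R ^+ e * `|a (n + t0)%N|.
Proof.
move=> sizeP n_gt0 rec gap; set m := (n + t0)%N.
have n1 : 1 <= `|n%:R : C| by rewrite normr_nat ler1n.
have rec_split : (P t0).[n%:R] * a m + \sum_(t | t != t0) (P t).[n%:R] * a (n + t)%N = 0.
  by move: rec; rewrite (bigD1 t0).
have -> : N%:R * `|(P t0).[n%:R]| * `|a m|
    = N%:R * `|\sum_(t | t != t0) (P t).[n%:R] * a (n + t)%N|.
  by rewrite -mulrA -normrM; move/eqP: rec_split; rewrite addr_eq0 => /eqP ->; rewrite normrN.
apply: le_trans (ler_wpM2l (ler0n _ _) (ler_norm_sum _ _ _)) _.
rewrite mulr_sumr !mulr_suml.
apply: le_trans (_ : _ <= \sum_(t | t != t0) coef_norm1 (P t) * n%:R ^+ e * `|a m|) _.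
  apply: ler_sum => t tt0; rewrite normrM mulrCA.
  apply: ler_pM; rewrite ?mulr_ge0 //; last exact: gap.
  by have := norm_horner_le (sizeP t) n1; rewrite normr_nat.
rewrite [leRHS](bigD1 t0) //= lerDr.
by rewrite !mulr_ge0 ?exprn_ge0 ?coef_norm1_ge0.
Qed.

Lemma gap_no_recurrence (a : nat -> C) r (P : 'I_r.+1 -> {poly C}) :
  num_gap_property a -> (exists t, P t != 0) ->
  ~ (forall n, \sum_t (P t).[n%:R] * a (n + t)%N = 0).
Proof.
move=> gap [t1 Pt1_neq0] rec.
have [t0 _ t0max] := @arg_maxnP _ t1 xpredT (fun t => size (P t)) isT.
have size_t0_gt0 : (0 < size (P t0))%N.
  by apply: leq_trans (t0max t1 isT); rewrite size_poly_gt0.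
set e := (size (P t0)).-1.
have sizeP t : (size (P t) <= e.+1)%N by rewrite /e prednK //; exact: t0max.
set l := `|lead_coef (P t0)|; set S := \sum_t coef_norm1 (P t).
have l_gt0 : 0 < l by rewrite normr_gt0 lead_coef_eq0 -size_poly_gt0.
have S_ge0 : 0 <= S by apply: sumr_ge0 => t _; exact: coef_norm1_ge0.
have [N0 N0l] : exists N0 : nat, 2 * S < N0%:R * l.
  have [N0 ?] := archi (divr_ge0 (mulr_ge0 (ler0n C 2) S_ge0) (ltW l_gt0)).
  by exists N0; rewrite -ltr_pdivrMr.
have [M M1 Mlow] := norm_horner_ge (P t0).
have [n0 Mn0] := archi (le_trans ler01 M1).
pose N := (N0 + r).+1.
have t0N : (t0 <= N)%N by apply: leq_trans (ltnW (ltn_ord t0)) _; lia.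
have [n [n0n am_gt0 gapn]] := gap_dominant_index n0 gap (ltn0Sn _) t0N.
have Mn : M <= `|n%:R : C|.
  by rewrite normr_nat; apply: le_trans (ltW Mn0) _; rewrite ler_nat.
have n_gt0 : (0 < n)%N by have := le_lt_trans M1 Mn0; rewrite ltr1n; lia.
have near t : t != t0 -> N%:R * `|a (n + t)%N| <= `|a (n + t0)%N|.
  by move=> tt0; apply: gapn tt0 _; apply: leq_trans (ltnW (ltn_ord t)) _; lia.
have := recurrence_dominant_bound sizeP n_gt0 (rec n) near.
rewrite ler_pM2r // => upper.
have := Mlow _ Mn; rewrite normr_nat -/e -/l => lower.
have X_gt0 : 0 < n%:R ^+ e :> C by rewrite exprn_gt0 // ltr0n.
have : N0%:R * l * n%:R ^+ e <= 2 * S * n%:R ^+ e.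
  apply: le_trans (_ : N%:R * (2 * `|(P t0).[n%:R]|) <= _).
    rewrite -mulrA; apply: ler_pM => //.
    - by rewrite mulr_ge0 // ltW.
    - by rewrite ler_nat /N; lia.
  by rewrite mulrCA -mulrA ler_wpM2l.
by rewrite ler_pM2r // => /(lt_le_trans N0l); rewrite ltxx.
Qed.

End GapRecurrence.

Section DiffOpRecurrence.
Variable K : comNzRingType.

Definition shifted_ffact (t i : nat) : {poly K} := \prod_(0 <= j < i) ('X - (j%:R - t%:R)%:P).

Lemma shifted_ffact_monic t i : shifted_ffact t i \is monic.
Proof. exact: monic_prod_XsubC. Qed.

Lemma size_shifted_ffact t i : size (shifted_ffact t i) = i.+1.
Proof. by rewrite size_prod_XsubC size_iota subn0. Qed.

Lemma horner_shifted_ffact t i n : (shifted_ffact t i).[n%:R] = ((n + t) ^_ i)%:R.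
Proof.
rewrite horner_prod; elim: i => [|i IHi]; first by rewrite big_geq.
rewrite big_nat_recr //= IHi hornerXsubC ffactnSr natrM.
have [it|ti] := leqP i (n + t); first by rewrite natrB // natrD; congr (_ * _); ring.
by rewrite ffact_small // !mul0r.
Qed.

Section RecurrenceCoef.
Variables (d B : nat) (q : 'I_d.+1 -> {poly K}).
Hypothesis size_qB : forall i, (size (q i) <= B)%N.

(* q_(i,k) x^k f^(i) contributes q_(i,k) (n + t)^_i f_(n + t) to the coefficient
   of x^(n + B), where t = B + i - k. *)
Definition recurrence_coef (t : nat) : {poly K} :=
  \sum_(i < d.+1) \sum_(k < B | (B + i == t + k)%N) (q i)`_k *: shifted_ffact t i.

Lemma diff_op_apply_coef (f : series K) n :
  diff_op_apply q f (n + B)%N =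
  \sum_(i < d.+1) \sum_(k < B) (q i)`_k * (f (n + B - k + i)%N *+ (n + B - k + i) ^_ i).
Proof.
have nB : (B <= (n + B).+1)%N by lia.
apply: eq_bigr => i _; pose F k := (q i)`_k * (f (n + B - k + i)%N *+ (n + B - k + i) ^_ i).
rewrite /smul [RHS](big_ord_widen _ F nB) [RHS]big_mkcond /=.
apply: eq_bigr => k _; rewrite sderivnE /ser_of_poly.
case: ltnP => // kB; rewrite nth_default ?mul0r //; exact: leq_trans (size_qB i) kB.
Qed.

Lemma recurrence_coefE (f : series K) n :
  \sum_(t < (B + d).+1) (recurrence_coef t).[n%:R] * f (n + t)%N = diff_op_apply q f (n + B)%N.
Proof.
rewrite diff_op_apply_coef.
under eq_bigr => t _ do rewrite horner_sum mulr_suml.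
rewrite exchange_big; apply: eq_bigr => i _.
under eq_bigr => t _ do rewrite horner_sum mulr_suml big_mkcond.
rewrite exchange_big; apply: eq_bigr => k _; rewrite -big_mkcond /=.
rewrite (eq_bigl (fun t : 'I_(B + d).+1 => t == (B + i - k)%N :> nat)); last first.
  by move=> t; apply/eqP/eqP; have := ltn_ord k; lia.
rewrite (big_ord1_eq _ (fun t => ((q i)`_k *: shifted_ffact t i).[n%:R] * f (n + t)%N)).
rewrite ifT; last by have := ltn_ord i; have := ltn_ord k; lia.
rewrite hornerZ horner_shifted_ffact -mulrA mulr_natl.
by have -> : (n + (B + i - k) = n + B - k + i)%N by have := ltn_ord k; lia.
Qed.

Lemma recurrence_coef_neq0 :
  (exists i, q i != 0) -> exists t : 'I_(B + d).+1, recurrence_coef t != 0.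
Proof.
(* For the top order D, the coefficient of 'X^D in recurrence_coef (B + D - k0)
   is the leading coefficient of q D. *)
move=> [i0 qi0]; have [D qD Dmax] := @arg_maxnP _ i0 (fun i => q i != 0) val qi0.
set k0 := (size (q D)).-1.
have k0B : (k0 < B)%N by rewrite /k0 prednK ?size_poly_gt0 ?size_qB.
have tB : (B + D - k0 < (B + d).+1)%N by have := ltn_ord D; lia.
exists (Ordinal tB); rewrite -lead_coef_eq0 in qD; apply: contraNneq qD => /= P0.
rewrite -[0](coef0 _ D) -P0 /recurrence_coef coef_sum (bigD1 D) //=.
rewrite [X in _ + X]big1 ?addr0; last first.
  move=> i iD; rewrite coef_sum big1 // => k _; rewrite coefZ.
  have [Di|iD'|/val_inj eiD] := ltngtP D i; last by rewrite eiD eqxx in iD.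
    have -> : q i = 0 by apply/eqP; apply: contraTT Di => /Dmax; rewrite -leqNgt.
    by rewrite coef0 mul0r.
  have : (size (shifted_ffact (B + D - k0) i) <= D)%N by rewrite size_shifted_ffact.
  by move/(nth_default 0) ->; rewrite mulr0.
rewrite coef_sum (eq_bigl (fun k : 'I_B => k == k0 :> nat)); last first.
  by move=> k; apply/eqP/eqP; lia.
rewrite (big_ord1_eq _ (fun k => ((q D)`_k *: shifted_ffact (B + D - k0) D)`_D)) k0B coefZ.
have /monicP := shifted_ffact_monic (B + D - k0) D.
by rewrite lead_coefE size_shifted_ffact /= => ->; rewrite mulr1.
Qed.

End RecurrenceCoef.

Lemma diff_op_recurrence d (q : 'I_d.+1 -> {poly K}) (f : series K) :
  (exists i, q i != 0) -> diff_op_apply q f = (fun _ => 0) ->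
  exists r (P : 'I_r.+1 -> {poly K}),
    (exists t, P t != 0) /\ forall n, \sum_t (P t).[n%:R] * f (n + t)%N = 0.
Proof.
move=> q_neq0 Lf0; set B := \max_(i < d.+1) size (q i).
have size_qB i : (size (q i) <= B)%N by exact: (leq_bigmax i).
exists (B + d)%N, (recurrence_coef B q); split; first exact: recurrence_coef_neq0.
by move=> n; rewrite recurrence_coefE // Lf0.
Qed.

End DiffOpRecurrence.

Lemma size_bounded_polys_dependent (A : idomainType) m k (Q : 'I_k -> {poly A}) :
  (m < k)%N -> (forall i, size (Q i) <= m)%N ->
  exists c : 'I_k -> A, (exists i, c i != 0) /\ \sum_i (c i)%:P * Q i = 0.
Proof.
elim: m k Q => [|m IHm] k Q mk sizeQ.
  exists (fun _ => 1); split; first by exists (Ordinal mk); rewrite oner_eq0.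
  by rewrite big1 // => i _; move: (sizeQ i); rewrite leqn0 size_poly_eq0 => /eqP ->; rewrite mulr0.
have [top0|] := boolP [forall i, (Q i)`_m == 0].
  apply: IHm (ltnW mk) _ => i; apply/leq_sizeP => j; rewrite leq_eqVlt => /predU1P[<-|mj].
    exact/eqP/(forallP top0).
  by apply/(leq_sizeP _ _ (sizeQ i)).
rewrite negb_forall => /existsP[i0 Qi0].
move: Q mk sizeQ i0 Qi0; case: k => [|k] Q mk sizeQ i0 Qi0; first by have := ltn_ord i0.
(* Eliminate the coefficient of 'X^m using Q i0. *)
set t := (Q i0)`_m.
pose Q' j := t%:P * Q (lift i0 j) - ((Q (lift i0 j))`_m)%:P * Q i0.
have sizeQ' j : (size (Q' j) <= m)%N.
  apply/leq_sizeP => l ml; rewrite /Q' coefB !coefCM.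
  move: ml; rewrite leq_eqVlt => /predU1P[<-|ml]; first by rewrite mulrC subrr.
  by rewrite !(leq_sizeP _ _ (sizeQ _) l ml) !mulr0 subrr.
have [c' [[j1 cj1] c'Q']] := IHm k Q' mk sizeQ'.
pose c j := if unlift i0 j is Some j' then c' j' * t
  else - \sum_(j' < k) c' j' * (Q (lift i0 j'))`_m.
exists c; split; first by exists (lift i0 j1); rewrite /c liftK mulf_neq0.
rewrite (bigD1_ord i0) //= /c unlift_none -[RHS]c'Q' /Q'.
under eq_bigr do rewrite liftK.
under [RHS]eq_bigr do rewrite mulrBr.
rewrite sumrB addrC polyCN mulNr; congr (_ - _).
  by apply: eq_bigr => j _; rewrite polyCM mulrA.
by rewrite rmorph_sum mulr_suml; apply: eq_bigr => j _; rewrite rmorphM mulrA.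
Qed.

Lemma ser_of_poly_comm (K : comNzRingType) (f : series K) : commr_rmorph (@ser_of_poly K) f.
Proof. by move=> y; exact: mulrC. Qed.

(* ser_eval f P is P(x, f): in {poly {poly K}} the inner variable is x and the
   outer one is y. *)
Notation ser_eval f := (horner_morph (ser_of_poly_comm f)).

Section SeriesEvaluation.
Variable K : idomainType.
Implicit Types (f : series K) (Q : {poly {poly K}}).

Lemma ser_evalC f p : ser_eval f p%:P = ser_of_poly p. Proof. exact: horner_morphC. Qed.
Lemma ser_evalX f : ser_eval f 'X = f. Proof. exact: horner_morphX. Qed.

Lemma poly_eval_seriesE Q f : poly_eval_series Q f = ser_eval f Q.
Proof.
rewrite /horner_morph (horner_coef_wide _ (size_poly _ _)).
apply: funext => n; rewrite /poly_eval_series sumsE; apply: eq_bigr => k _.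
by rewrite coef_map /= sexpE.
Qed.

Lemma diff_op_applyE d (q : 'I_d.+1 -> {poly K}) f :
  diff_op_apply q f = \sum_(i < d.+1) ser_of_poly (q i) * sderivn i f.
Proof. by apply: funext => n; rewrite sumsE. Qed.

Lemma ser_eval_comp f Q R : ser_eval f (Q \Po R) = ser_eval (ser_eval f R) Q.
Proof.
rewrite /comp_poly -horner_map /= -map_poly_comp.
by rewrite /horner_morph; congr (_.[_]); apply: eq_map_poly => p /=; rewrite ser_evalC.
Qed.

Definition deriv_x Q : {poly {poly K}} := map_poly (@deriv K) Q.

Lemma deriv_xMXaddC Q p : deriv_x (Q * 'X + p%:P) = deriv_x Q * 'X + (p^`())%:P.
Proof.
apply/polyP => i; rewrite /deriv_x coef_map_id0 ?deriv0 // !coefD !coefMX !coefC.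
by rewrite coef_map_id0 ?deriv0 //; case: (i == 0%N); rewrite ?add0r ?addr0.
Qed.

Lemma sderiv_ser_eval f Q :
  sderiv (ser_eval f Q) = ser_eval f (deriv_x Q) + ser_eval f Q^`() * sderiv f.
Proof.
elim/poly_ind: Q => [|Q p IHQ].
  by rewrite /deriv_x map_poly0 deriv0 !rmorph0 sderiv0 mul0r addr0.
rewrite deriv_xMXaddC derivMXaddC !rmorphD !rmorphM /= !ser_evalX !ser_evalC.
by rewrite sderivD sderivM sderiv_ser_of_poly IHQ; ring.
Qed.

Lemma root_invertible (s : series K) Q : s != 0 -> Q != 0 -> ser_eval s Q = 0 ->
  exists2 b : {poly K}, b != 0 & exists Z, s * ser_eval s Z = ser_of_poly b.
Proof.
move=> s_neq0; elim/poly_ind: Q => [|Q p IHQ]; first by rewrite eqxx.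
rewrite rmorphD rmorphM /= ser_evalX ser_evalC => Qp_neq0.
have [p0|p_neq0] := eqVneq p 0; last first.
  move=> Qs; exists p => //; exists (- Q); rewrite rmorphN mulrN mulrC.
  by apply/eqP; rewrite eq_sym -addr_eq0 addrC Qs.
rewrite p0 rmorph0 addr0 => Qs0; apply: IHQ.
  by apply: contraNneq Qp_neq0 => ->; rewrite p0 mul0r addr0.
by apply/eqP; apply: contraT => /mul_series_neq0 /(_ s_neq0); rewrite Qs0 eqxx.
Qed.

End SeriesEvaluation.

Section AlgebraicSeries.
Variables (C : numDomainType) (f : series C).
Implicit Types (x : series C) (Q : {poly {poly C}}).

(* x lies in C(x)[f]. *)
Definition is_ratpoly_in x :=
  exists2 g : {poly C}, g != 0 & exists Q, ser_of_poly g * x = ser_eval f Q.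

Lemma ratpoly_in_ser_eval Q : is_ratpoly_in (ser_eval f Q).
Proof. by exists 1; [exact: oner_neq0 | exists Q; rewrite rmorph1 mul1r]. Qed.

Variable P0 : {poly {poly C}}.
Hypotheses (P0_neq0 : P0 != 0) (P0f : ser_eval f P0 = 0).
Hypothesis P0_min : forall Q, (size Q < size P0)%N -> ser_eval f Q = 0 -> Q = 0.
Local Notation d := (size P0).-1.

Lemma size_annihilator_gt1 : (1 < size P0)%N.
Proof.
rewrite ltnNge; apply/negP => /size1_polyC P0C.
by move: P0f P0_neq0; rewrite P0C ser_evalC polyC_eq0 => /eqP; rewrite ser_of_poly_eq0 => ->.
Qed.

Lemma separant_neq0 : ser_eval f P0^`() != 0.
Proof.
have d_gt0 : (0 < d)%N by have := size_annihilator_gt1; lia.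
have P0'_neq0 : P0^`() != 0.
  (* characteristic 0: d times the leading coefficient of P0 is nonzero *)
  apply/eqP => /(congr1 (fun Q : {poly {poly C}} => Q`_d.-1)); rewrite coef_deriv coef0 prednK //.
  set L := P0`_d; have L_neq0 : L != 0 by rewrite /L -lead_coefE lead_coef_eq0.
  move/(congr1 (fun p : {poly C} => p`_(size L).-1)); rewrite coefMn coef0 => /eqP.
  rewrite mulrn_eq0 -lead_coefE lead_coef_eq0 (negPf L_neq0) orbF => /eqP d0.
  by rewrite d0 in d_gt0.
by apply: contra P0'_neq0 => /eqP /P0_min -> //; exact: lt_size_deriv.
Qed.

Lemma reduce_mod_annihilator Q : exists2 l : {poly C}, l != 0 &
  exists2 R : {poly {poly C}}, (size R <= d)%N & ser_eval f R = ser_of_poly l * ser_eval f Q.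
Proof.
set L := lead_coef P0; exists (L ^+ scalp Q P0); first by rewrite expf_neq0 ?lead_coef_eq0.
exists (Q %% P0); first by rewrite -ltnS prednK ?ltn_modpN0 // size_poly_gt0.
have -> : Q %% P0 = L ^+ scalp Q P0 *: Q - (Q %/ P0) * P0.
  by rewrite Pdiv.Idomain.divp_eq addrAC subrr add0r.
by rewrite rmorphB rmorphM /= P0f mulr0 subr0 -mul_polyC rmorphM /= ser_evalC.
Qed.

Lemma ratpoly_dependent (x : 'I_d.+1 -> series C) : (forall j, is_ratpoly_in (x j)) ->
  exists c : 'I_d.+1 -> {poly C}, (exists j, c j != 0) /\ \sum_j ser_of_poly (c j) * x j = 0.
Proof.
move=> x_ratpoly.
have reduced j : exists gR : {poly C} * {poly {poly C}},
    [/\ gR.1 != 0, (size gR.2 <= d)%N & ser_eval f gR.2 = ser_of_poly gR.1 * x j].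
  have [g g_neq0 [H gH]] := x_ratpoly j; have [l l_neq0 [R sizeR lR]] := reduce_mod_annihilator H.
  by exists (l * g, R); split => //=; [rewrite mulf_neq0 | rewrite lR -gH rmorphM mulrA].
have [gR gRP] := choice reduced.
have [|c [[j1 cj1] cR]] := @size_bounded_polys_dependent _ d _ (fun j => (gR j).2) (ltnSn d).
  by move=> j; case: (gRP j).
exists (fun j => c j * (gR j).1); split; first by exists j1; rewrite mulf_neq0 //; case: (gRP j1).
have sum0 : \sum_j ser_eval f ((c j)%:P * (gR j).2) = 0 by rewrite -rmorph_sum cR rmorph0.
rewrite -[RHS]sum0; apply: eq_bigr => j _; rewrite [RHS]rmorphM /= ser_evalC.
by case: (gRP j) => _ _ ->; rewrite rmorphM mulrA.
Qed.

Lemma separant_invertible : exists2 b : {poly C}, b != 0 &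
  exists Z, ser_eval f P0^`() * ser_eval f Z = ser_of_poly b.
Proof.
set S := ser_eval f P0^`().
have S_ratpoly j : is_ratpoly_in (S ^+ j) by rewrite /S -rmorphXn; exact: ratpoly_in_ser_eval.
have [c [[j1 cj1] cS]] := ratpoly_dependent S_ratpoly.
pose B := \sum_(j < d.+1) c j *: 'X^j.
have B_neq0 : B != 0.
  apply: contra cj1 => /eqP /(congr1 (fun Q : {poly {poly C}} => Q`_j1)).
  rewrite coef0 coef_sum (bigD1 j1) //= coefZ coefXn eqxx mulr1 big1 ?addr0 => [->//|j jj1].
  by rewrite coefZ coefXn val_eqE eq_sym (negPf jj1) mulr0.
have BS : ser_eval S B = 0.
  rewrite -cS rmorph_sum; apply: eq_bigr => j _.
  by rewrite -mul_polyC rmorphM /= ser_evalC rmorphXn /= ser_evalX.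
have [b b_neq0 [Z SZ]] := root_invertible separant_neq0 B_neq0 BS.
by exists b => //; exists (Z \Po P0^`()); rewrite ser_eval_comp.
Qed.

Lemma ratpoly_in_sderiv_f : is_ratpoly_in (sderiv f).
Proof.
have [b b_neq0 [Z SZ]] := separant_invertible; exists b => //; exists (- (Z * deriv_x P0)).
have chain : ser_eval f (deriv_x P0) = - (ser_eval f P0^`() * sderiv f).
  by apply/eqP; rewrite -addr_eq0 -sderiv_ser_eval P0f sderiv0.
by rewrite -SZ rmorphN rmorphM /= chain; ring.
Qed.

Lemma ratpoly_in_sderiv x : is_ratpoly_in x -> is_ratpoly_in (sderiv x).
Proof.
(* From g x = H(f) and b f' = W(f):
   g^2 b x' = g b (d_x H)(f) + g (d_y H)(f) W(f) - g' b H(f). *)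
move=> [g g_neq0 [H gH]]; have [b b_neq0 [W bW]] := ratpoly_in_sderiv_f.
exists (g * g * b); first by rewrite !mulf_neq0.
exists ((g * b)%:P * deriv_x H + g%:P * H^`() * W - (g^`() * b)%:P * H).
have := congr1 (@sderiv C) gH; rewrite sderivM sderiv_ser_of_poly sderiv_ser_eval => dgH.
rewrite rmorphB rmorphD !rmorphM /= !ser_evalC -bW -gH.
have -> : ser_eval f (deriv_x H) =
    ser_of_poly g^`() * x + ser_of_poly g * sderiv x - ser_eval f H^`() * sderiv f.
  by rewrite dgH addrK.
ring.
Qed.

Lemma ratpoly_in_sderivn i : is_ratpoly_in (sderivn i f).
Proof.
elim: i => [|i IHi]; first by have := ratpoly_in_ser_eval 'X; rewrite ser_evalX.
by rewrite /sderivn iterS; apply: ratpoly_in_sderiv.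
Qed.

Lemma annihilator_diff_op : exists q : 'I_d.+1 -> {poly C},
  (exists i, q i != 0) /\ \sum_i ser_of_poly (q i) * sderivn i f = 0.
Proof. exact: ratpoly_dependent ratpoly_in_sderivn. Qed.

End AlgebraicSeries.

Lemma minimal_annihilator (K : idomainType) (f : series K) (P : {poly {poly K}}) :
  P != 0 -> ser_eval f P = 0 ->
  exists P0 : {poly {poly K}}, [/\ P0 != 0, ser_eval f P0 = 0 &
    forall Q : {poly {poly K}}, (size Q < size P0)%N -> ser_eval f Q = 0 -> Q = 0].
Proof.
move=> P_neq0 Pf.
pose ann n := `[< exists Q : {poly {poly K}}, [/\ Q != 0, ser_eval f Q = 0 & size Q = n] >].
have annP : exists n, ann n by exists (size P); apply/asboolP; exists P.
case: (ex_minnP annP) => n /asboolP[P0 [P0_neq0 P0f <-]] P0_min.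
exists P0; split => // Q sizeQ Qf; apply/eqP; apply: contraT => Q_neq0.
have := P0_min (size Q); rewrite leqNgt sizeQ; apply.
by apply/asboolP; exists Q.
Qed.

Lemma algebraic_diff_op (C : numDomainType) (f : series C) (P : {poly {poly C}}) :
  P != 0 -> poly_eval_series P f = (fun _ => 0) ->
  exists d (q : 'I_d.+1 -> {poly C}), (exists i, q i != 0) /\ diff_op_apply q f = (fun _ => 0).
Proof.
move=> P_neq0; rewrite poly_eval_seriesE => Pf.
have [P0 [P0_neq0 P0f P0_min]] := minimal_annihilator P_neq0 Pf.
have [q [q_neq0 Lq]] := annihilator_diff_op P0_neq0 P0f P0_min.
by exists (size P0).-1, q; rewrite diff_op_applyE Lq.
Qed.

Lemma complex_archimedean (R : realType) (x : R[i]) : 0 <= x -> exists n : nat, x < n%:R.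
Proof.
move=> x_ge0; have x_real : x \is Num.real := ger0_real x_ge0.
rewrite -(RRe_real x_real) ler0c in x_ge0 *.
exists (Num.Def.archi_bound (complex.Re x)).
by rewrite -[X in _ < X](rmorph_nat (real_complex R)) ltcR; exact: archi_boundP.
Qed.

Theorem proposition6p2 (R : realType) (a : nat -> R[i]) :
  gap_property a ->
  (forall (d : nat) (q : 'I_d.+1 -> {poly R[i]}),
      (exists i, q i != 0) -> diff_op_apply q a <> (fun _ => 0))
  /\
  (forall P : {poly {poly R[i]}}, P != 0 -> poly_eval_series P a <> (fun _ => 0)).
Proof.
move=> gap.
have no_diff_eq d (q : 'I_d.+1 -> {poly R[i]}) :
    (exists i, q i != 0) -> diff_op_apply q a <> (fun _ => 0).
  move=> q_neq0 /(diff_op_recurrence q_neq0) [r [P [P_neq0 rec]]].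
  by apply: (gap_no_recurrence (@complex_archimedean R) gap P_neq0); exact rec.
split=> // P P_neq0 /(algebraic_diff_op P_neq0) [d [q [q_neq0]]].
exact: no_diff_eq.
Qed.
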